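(* Let $\lambda>0$, $p\in(1,\infty)$, and let $X$ be a Banach space having a closed linear subspace $Y$ of finite codimension such that $Y$ has property $\lambda$-HFC$_{p,d}$ (resp. $\lambda$-HIC$_{p,d}$). Then for every $\varepsilon>0$, $X$ has property $(\lambda+\varepsilon)$-HFC$_{p,d}$ (resp. $(\lambda+\varepsilon)$-HIC$_{p,d}$).
   Context: For $\mathbb{M}\subset\mathbb{N}$ infinite and $k\in\mathbb{N}$, $[\mathbb{M}]^k=\{\overline{n}=(n_1,\dots,n_k)\in\mathbb{M}^k: n_1<\cdots<n_k\}$; $[\mathbb{N}]^\omega$ denotes the set of infinite subsets of $\mathbb{N}$. Set $I_k(\mathbb{M})=\{(\overline{n},\overline{m})\in[\mathbb{M}]^k\times[\mathbb{M}]^k: n_1<m_1<n_2<m_2<\cdots<n_k<m_k\}$ and, for $1\le j\le k$, $H_j(\mathbb{M})=\{(\overline{n},\overline{m})\in[\mathbb{M}]^k\times[\mathbb{M}]^k: n_i=m_i \text{ for all } i\neq j,\ n_j<m_j\}$. For a map $f:[\mathbb{N}]^k\to (X,d)$, $\operatorname{Lip}_j(f)=\sup_{(\overline{n},\overline{m})\in H_j(\mathbb{N})} d(f(\overline{n}),f(\overline{m}))$. A metric space $(X,d)$ has property $\lambda$-HFC$_{p,d}$ (resp. $\lambda$-HIC$_{p,d}$), for $\lambda>0$, $p\in(1,\infty)$, if for every $k\in\mathbb{N}$ and every bounded function $f:[\mathbb{N}]^k\to X$ there exists $\mathbb{M}\in[\mathbb{N}]^\omega$ such that $d(f(\overline{n}),f(\overline{m}))\le\lambda\left(\sum_{j=1}^k\operatorname{Lip}_j(f)^p\right)^{1/p}$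 for all $\overline{n},\overline{m}\in[\mathbb{M}]^k$ (resp. for all $(\overline{n},\overline{m})\in I_k(\mathbb{M})$). *)

From HB Require Import structures.
From mathcomp Require Import all_boot all_order all_algebra.
From mathcomp Require Import all_classical all_reals all_analysis.
Set Implicit Arguments. Unset Strict Implicit. Unset Printing Implicit Defensive.
Import Order.TTheory GRing.Theory Num.Theory.
Import numFieldNormedType.Exports.
Local Open Scope classical_set_scope.
Local Open Scope ring_scope.

(* An element of [M]^k is a strictly increasing map 'I_k -> nat with values in M. *)
Definition incr_tuple (k : nat) (n : 'I_k -> nat) : Prop :=
  forall i j : 'I_k, (i < j)%N -> (n i < n j)%N.

Definition in_tuples (M : set nat) (k : nat) (n : 'I_k -> nat) : Prop :=
  incr_tuple n /\ forall i : 'I_k, M (n i).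

Definition interlaced (M : set nat) (k : nat) (n m : 'I_k -> nat) : Prop :=
  in_tuples M n /\ in_tuples M m /\
  forall i : 'I_k, (n i < m i)%N /\
    (forall j : 'I_k, nat_of_ord j = (nat_of_ord i).+1 -> (m i < n j)%N).

Definition Hj (k : nat) (j : 'I_k) (n m : 'I_k -> nat) : Prop :=
  in_tuples setT n /\ in_tuples setT m /\
  (forall i : 'I_k, i != j -> n i = m i) /\ (n j < m j)%N.

Definition Lipj (R : realType) (X : normedModType R) (k : nat)
  (f : ('I_k -> nat) -> X) (j : 'I_k) : R :=
  sup [set r : R | exists n m, Hj j n m /\ r = `|f n - f m|].

(* A function
   [N]^k -> A is a function on k-tuples whose values on increasing tuples lie in A. *)
Definition has_HC (interl : bool) (R : realType) (X : normedModType R)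
  (p lam : R) (A : set X) : Prop :=
  forall (k : nat) (f : ('I_k -> nat) -> X),
    (forall n, in_tuples setT n -> A (f n)) ->
    (exists B : R, forall n, in_tuples setT n -> `|f n| <= B) ->
    exists M : set nat, infinite_set M /\
      forall n m : 'I_k -> nat,
        (if interl then interlaced M n m
         else in_tuples M n /\ in_tuples M m) ->
        `|f n - f m| <= lam * (\sum_(j < k) (Lipj f j) `^ p) `^ (p^-1).

Definition HFC := has_HC false.
Definition HIC := has_HC true.

Definition closed_subspace (R : realType) (X : normedModType R) (Y : set X) : Prop :=
  Y 0 /\ (forall x y, Y x -> Y y -> Y (x + y)) /\
  (forall (a : R) x, Y x -> Y (a *: x)) /\ closed Y.

Definition finite_codim (R : realType) (X : normedModType R) (Y : set X) : Prop :=
  exists (d : nat) (e : 'I_d -> X), forall x : X,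
    exists c : 'I_d -> R, Y (x - \sum_(i < d) c i *: e i).

From HB Require Import structures.
From mathcomp Require Import all_boot all_order all_algebra.
From mathcomp Require Import all_classical all_reals all_analysis.
From mathcomp Require Import zify ring lra.
Set Implicit Arguments. Unset Strict Implicit. Unset Printing Implicit Defensive.
Import Order.TTheory GRing.Theory Num.Theory.
Import numFieldNormedType.Exports.
Local Open Scope classical_set_scope.
Local Open Scope ring_scope.

(* Ramsey's theorem lets a bounded map f : [N]^k -> X be compared with a map into Y.
   Because Y has finite codimension, adding the complementary directions one at a
   time shows that along some infinite M every difference f n - f m lies within a
   prescribed dl > 0 of Y: the coordinate along each new line is bounded, hence
   stabilized up to dl on an infinite set by Ramsey's theorem for two colours and
   bisection. Re-indexing by the enumeration of M and fixing a base tuple n0, the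
   differences f n - f n0 are dl-close to a Y-valued g with Lip_j g <= Lip_j f + 2 dl,
   and the HC inequality for g in Y gives that for f up to an error O(dl), which is
   absorbed into eps times the p-norm of the Lip_j f when that norm is positive; when
   it vanishes, f is constant. *)

Definition unbounded (M : set nat) := forall N, exists2 x, (N <= x)%N & M x.

Lemma unboundedP M : unbounded M <-> infinite_set M.
Proof.
split=> [uM /finite_seqP[s sE] | iM N].
  have [x Nx Mx] := uM (\max_(y <- s) y).+1.
  have xs : x \in s by move: Mx; rewrite sE.
  have := @leq_bigmax_seq _ s xpredT id x xs isT; lia.
apply: contrapT => noM; apply: iM; apply: sub_finite_set (finite_II N) => x Mx /=.
by rewrite ltnNge; apply/negP => Nx; apply: noM; exists x.
Qed.

Lemma unboundedT : unbounded setT.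
Proof. by move=> N; exists N. Qed.

Lemma homo_ltn_leq_id (a : nat -> nat) : {homo a : i j / (i < j)%N} ->
  forall i, (i <= a i)%N.
Proof. by move=> a_inc; elim=> // i IH; apply: leq_ltn_trans IH (a_inc _ _ _). Qed.

Lemma unbounded_image (a : nat -> nat) (A : set nat) : {homo a : i j / (i < j)%N} ->
  unbounded A -> unbounded (a @` A).
Proof.
move=> a_inc uA N; have [i Ni Ai] := uA N.
exists (a i); last by exists i.
exact: leq_trans Ni (homo_ltn_leq_id a_inc i).
Qed.

Lemma unbounded_enum (M : set nat) : unbounded M ->
  exists2 phi : nat -> nat, (forall i, M (phi i)) & {homo phi : i j / (i < j)%N}.
Proof.
move=> uM; have /choice[g gP] : forall N, exists x, (N <= x)%N /\ M x.
  by move=> N; have [x] := uM N; exists x.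
pose phi := fix phi i := if i is i'.+1 then g (phi i').+1 else g 0%N.
exists phi; first by case=> [|i]; apply: (gP _).2.
by apply: (@homo_ltn _ phi (fun x y => (x < y)%N) ltn_trans) => i; case: (gP (phi i).+1).
Qed.

Lemma unbounded_bool_fiber (b : nat -> bool) : exists b0, unbounded [set i | b i = b0].
Proof.
have [uT|] := EM (unbounded [set i | b i = true]); first by exists true.
move=> /existsNP[N0 notT]; exists false => N.
exists (maxn N N0); first exact: leq_maxl.
by apply/negbTE/negP => bT; apply: notT; exists (maxn N N0); first exact: leq_maxr.
Qed.

Lemma diagonal_refinement (Q : nat -> bool -> set nat -> Prop) (M0 : set nat) :
  (forall a b A B, A `<=` B -> Q a b B -> Q a b A) ->
  (forall M, unbounded M -> exists a b M', [/\ M a, M' `<=` M, unbounded M',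
     (forall x, M' x -> (a < x)%N) & Q a b M']) ->
  unbounded M0 ->
  exists a b, [/\ forall i, M0 (a i), {homo a : i j / (i < j)%N} &
    forall i, Q (a i) (b i) (a @` [set j | (i < j)%N])].
Proof.
move=> Qanti step uM0.
pose St := {M : set nat | unbounded M}.
have /choice[next nextP] : forall S : St, exists t : nat * bool * St,
    [/\ sval S t.1.1, sval t.2 `<=` sval S,
      (forall x, sval t.2 x -> (t.1.1 < x)%N) & Q t.1.1 t.1.2 (sval t.2)].
  move=> [M uM]; have [a [b [M' [Ma M'M uM' aM' Qa]]]] := step M uM.
  by exists (a, b, exist _ M' uM').
pose S i := iter i (fun S => (next S).2) (exist _ M0 uM0).
pose a i := (next (S i)).1.1.
have S_decr i j : (i <= j)%N -> sval (S j) `<=` sval (S i).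
  move=> /subnKC <-; elim: (j - i)%N => [|d IHd]; first by rewrite addn0.
  by rewrite addnS => x; case: (nextP (S (i + d)%N)) => _ sub _ _ /sub /IHd.
have aS i : sval (S i) (a i) by case: (nextP (S i)).
have a_inc : {homo a : i j / (i < j)%N}.
  by move=> i j ij; case: (nextP (S i)) => _ _ + _; apply; exact: (S_decr _ _ ij _ (aS j)).
exists a, (fun i => (next (S i)).1.2); split => // [i|i].
  exact: S_decr _ _ (leq0n i) _ (aS i).
case: (nextP (S i)) => _ _ _; apply: Qanti => _ [j ij <-].
exact: S_decr _ _ ij _ (aS j).
Qed.

Definition sorted_in (M : set nat) (s : seq nat) :=
  sorted ltn s /\ forall x, x \in s -> M x.

Lemma ramsey_seq k (c : seq nat -> bool) (M0 : set nat) : unbounded M0 ->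
  exists M b, [/\ M `<=` M0, unbounded M &
    forall s, size s = k -> sorted_in M s -> c s = b].
Proof.
elim: k c M0 => [|k IH] c M0 uM0.
  by exists M0, (c [::]); split=> // -[|].
pose Q a b M := forall s, size s = k -> sorted_in M s -> c (a :: s) = b.
have Qanti a b A B : A `<=` B -> Q a b B -> Q a b A.
  by move=> AB QB s sz [srt As]; apply: QB => //; split=> // x /As/AB.
have Qstep M : unbounded M -> exists a b M', [/\ M a, M' `<=` M, unbounded M',
    (forall x, M' x -> (a < x)%N) & Q a b M'].
  move=> uM; have [a _ Ma] := uM 0%N.
  have uMa : unbounded [set x | M x /\ (a < x)%N].
    move=> N; have [x Nx Mx] := uM (maxn N a.+1).
    by exists x; [lia | split=> //; lia].
  have [M' [b [M'M uM' cM']]] := IH (fun s => c (a :: s)) _ uMa.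
  by exists a, b, M'; split=> // [x /M'M[] | x /M'M[]].
have [a [b [aM0 a_inc Qa]]] := diagonal_refinement Qanti Qstep uM0.
have [b0 ub0] := unbounded_bool_fiber b.
exists (a @` [set i | b i = b0]), b0; split.
- by move=> _ [i _ <-].
- exact: unbounded_image.
move=> [//|x s] [sz] [+ sM]; rewrite /= (path_sortedE ltn_trans) => /andP[/allP xs srt].
have [i bi ai] := sM x (mem_head _ _); rewrite -bi -ai.
apply: Qa => //; split=> // y ys.
have [j _ aj] := sM y (mem_behead (ys : y \in behead (x :: s))); exists j => //.
by move: (xs y ys); rewrite -ai -aj (leqW_mono (leq_mono a_inc)).
Qed.

Lemma in_tuplesS k (M M' : set nat) (n : 'I_k -> nat) :
  M `<=` M' -> in_tuples M n -> in_tuples M' n.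
Proof. by move=> MM' [n_inc nM]; split=> // i; apply: MM'. Qed.

Lemma ramsey_tuples k (c : ('I_k -> nat) -> bool) (M0 : set nat) : unbounded M0 ->
  exists M b, [/\ M `<=` M0, unbounded M & forall n, in_tuples M n -> c n = b].
Proof.
move=> uM0.
have [M [b [MM0 uM cM]]] := ramsey_seq k (fun s => c (fun i => nth 0%N s i)) uM0.
exists M, b; split=> // n [n_inc nM].
have <- : (fun i : 'I_k => nth 0%N (map n (enum 'I_k)) i) = n.
  by apply: funext => i; rewrite (nth_map i) ?size_enum_ord // nth_ord_enum.
apply: cM; first by rewrite size_map size_enum_ord.
split; last by move=> x /mapP[i _ ->].
apply/(sortedP 0%N) => i; rewrite size_map size_enum_ord => ik.
have ik' : (i < k)%N by lia.
rewrite (nth_map (Ordinal ik')) ?size_enum_ord //.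
rewrite (nth_map (Ordinal ik')) ?size_enum_ord //.
by apply: n_inc; rewrite !nth_enum_ord.
Qed.

Section RamseyReal.
Variable R : realType.

Lemma ramsey_bisect k (t : ('I_k -> nat) -> R) (w : R) j (M0 : set nat) a :
  unbounded M0 -> (forall n, in_tuples M0 n -> a <= t n <= a + w) ->
  exists M a', [/\ M `<=` M0, unbounded M &
    forall n, in_tuples M n -> a' <= t n <= a' + w / 2 ^+ j].
Proof.
elim: j M0 a => [|j IH] M0 a uM0 tM0.
  by exists M0, a; split=> // n /tM0; rewrite expr0 divr1.
have [M [a' [MM0 uM tM]]] := IH M0 a uM0 tM0.
have [M' [b [M'M uM' tM']]] :=
  ramsey_tuples (fun n => t n <= a' + w / 2 ^+ j.+1) uM.
have halve : w / 2 ^+ j = w / 2 ^+ j.+1 + w / 2 ^+ j.+1.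
  by rewrite exprS; field; rewrite expf_neq0.
exists M'; case: b tM' => tM'.
  exists a'; split=> [x /M'M/MM0 // | // | n nM'].
  by have /andP[-> _] := tM n (in_tuplesS M'M nM'); rewrite tM'.
exists (a' + w / 2 ^+ j.+1); split=> [x /M'M/MM0 // | // | n nM'].
have /andP[_ le_t] := tM n (in_tuplesS M'M nM').
have /negbT := tM' n nM'; rewrite -ltNge => /ltW ->.
by rewrite -addrA -halve.
Qed.

Lemma ramsey_real k (t : ('I_k -> nat) -> R) (M0 : set nat) (B eta : R) :
  unbounded M0 -> 0 < eta -> (forall n, in_tuples M0 n -> `|t n| <= B) ->
  exists M, [/\ M `<=` M0, unbounded M &
    forall n m, in_tuples M n -> in_tuples M m -> `|t n - t m| <= eta].
Proof.
move=> uM0 eta0 tB.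
pose w := 2 * `|B|.
have tM0 n : in_tuples M0 n -> - `|B| <= t n <= - `|B| + w.
  move=> /tB; rewrite ler_norml /w => /andP[tl tu].
  have := ler_norm B; have := ler_normr B; lra.
pose j := Num.Def.archi_bound (w / eta).
have [M [a [MM0 uM tM]]] := ramsey_bisect j uM0 tM0.
exists M; split=> // n m nM mM.
have w_le : w / 2 ^+ j <= eta.
  have w0 : 0 <= w by rewrite mulr_ge0.
  have jw : w / eta < j%:R by apply: archi_boundP; rewrite divr_ge0 // ltW.
  have j2 : (j%:R : R) <= 2 ^+ j by rewrite -natrX ler_nat ltnW // ltn_expl.
  rewrite ler_pdivrMr ?exprn_gt0 //; apply: ltW.
  by rewrite -ltr_pdivrMl // mulrC (lt_le_trans jw j2).
have /andP[tn1 tn2] := tM n nM; have /andP[tm1 tm2] := tM m mM.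
rewrite ler_norml; apply/andP; split; lra.
Qed.

End RamseyReal.

Section DistVia.
Variables (R : numDomainType) (V : normedZmodType R).

Lemma subr_via (a b u v : V) : a - b = (a - u) - (b - v) + (u - v).
Proof. by rewrite opprB addrAC !subrKA. Qed.

Lemma ler_dist_via (a b u v : V) : `|a - b| <= `|a - u| + `|b - v| + `|u - v|.
Proof.
rewrite {1}(subr_via a b u v); apply: le_trans (ler_normD _ _) _.
by rewrite lerD2r ler_normB.
Qed.

Lemma ler_dist_via_sub (a b u v y : V) :
  `|a - b - y| <= `|a - u| + `|b - v| + `|u - v - y|.
Proof.
have := ler_dist_via a (b + y) u (v + y).
have -> : b + y - (v + y) = b - v by rewrite [v + y]addrC addrKA.
by rewrite !opprD !addrA.
Qed.

End DistVia.

Section Subspaces.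
Variables (R : realType) (X : normedModType R).

Definition is_subspace (Z : set X) := [/\ Z 0,
  forall x y, Z x -> Z y -> Z (x + y) & forall (a : R) x, Z x -> Z (a *: x)].

Lemma closed_subspaceP (Y : set X) : closed_subspace Y -> is_subspace Y /\ closed Y.
Proof. by move=> [Y0 [YD [YZ cY]]]. Qed.

Lemma subspaceB (Z : set X) x y : is_subspace Z -> Z x -> Z y -> Z (x - y).
Proof. by move=> [_ ZD ZZ] Zx Zy; rewrite -scaleN1r; apply: ZD => //; apply: ZZ. Qed.

Lemma closure_normP (A : set X) x :
  closure A x <-> forall e, 0 < e -> exists2 a, A a & `|x - a| < e.
Proof.
split=> [clAx e e0 | Ax B /nbhs_ballP[e e0 eB]].
  have [a [Aa xa]] := clAx _ (nbhsx_ballx x e e0).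
  by exists a; move: xa; rewrite -ball_normE.
have [a Aa xa] := Ax e e0; exists a; split=> //; apply: eB.
by rewrite -ball_normE.
Qed.

Lemma subspace_closure (Z : set X) : is_subspace Z -> is_subspace (closure Z).
Proof.
move=> [Z0 ZD ZZ]; split; first exact: subset_closure.
  move=> x y /closure_normP clx /closure_normP cly; apply/closure_normP => e e0.
  have [a Za xa] := clx (e / 2) (divr_gt0 e0 (ltr0Sn _ 1)).
  have [b Zb yb] := cly (e / 2) (divr_gt0 e0 (ltr0Sn _ 1)).
  exists (a + b); first exact: ZD.
  rewrite opprD addrACA; apply: le_lt_trans (ler_normD _ _) _; lra.
move=> c x /closure_normP clx; apply/closure_normP => e e0.
have c1 : 0 < `|c| + 1 by rewrite ltr_wpDl.
have [a Za xa] := clx (e / (`|c| + 1)) (divr_gt0 e0 c1).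
exists (c *: a); first exact: ZZ.
rewrite -scalerBr normrZ; apply: le_lt_trans (_ : _ <= (`|c| + 1) * `|x - a|) _.
  by rewrite ler_wpM2r // lerDl.
by rewrite mulrC -ltr_pdivlMr.
Qed.

Lemma closed_dist_gt0 (Z : set X) e : closed Z -> ~ Z e ->
  exists2 r, 0 < r & forall z, Z z -> r <= `|e - z|.
Proof.
move=> cZ Ze; apply: contrapT => no_r; apply: Ze.
rewrite (closure_id Z).1 //; apply/closure_normP => r r0.
apply: contrapT => no_z; apply: no_r; exists r => // z Zz.
by rewrite leNgt; apply/negP => lt_r; apply: no_z; exists z.
Qed.

Definition add_line (Z : set X) (e : X) := [set z + t *: e | z in Z & t in [set: R]].

Lemma subspace_add_line (Z : set X) e : is_subspace Z -> is_subspace (add_line Z e).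
Proof.
move=> [Z0 ZD ZZ]; split; first by exists 0 => //; exists 0; rewrite ?scale0r ?addr0.
  move=> _ _ [z1 Z1 [t1 _ <-]] [z2 Z2 [t2 _ <-]]; exists (z1 + z2); first exact: ZD.
  by exists (t1 + t2) => //; rewrite scalerDl addrACA.
move=> a _ [z Zz [t _ <-]]; exists (a *: z); first exact: ZZ.
by exists (a * t) => //; rewrite scalerDr scalerA.
Qed.

Lemma ler_dist_add_line e (x1 x2 z1 z2 y : X) (t1 t2 : R) :
  `|x1 - x2 - y| <= `|x1 - (z1 + t1 *: e)| + `|x2 - (z2 + t2 *: e)|
    + (`|z1 - z2 - y| + `|t1 - t2| * `|e|).
Proof.
apply: le_trans (ler_dist_via_sub _ _ (z1 + t1 *: e) (z2 + t2 *: e) _) _.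
rewrite lerD2l opprD addrACA -scalerBl [X in `|X|]addrAC -normrZ.
exact: ler_normD.
Qed.

Section DistantLine.
Variables (Z : set X) (e : X) (r : R).
Hypotheses (sZ : is_subspace Z) (r_gt0 : 0 < r) (r_dist : forall z, Z z -> r <= `|e - z|).

Lemma add_line_coord_le z t : Z z -> `|t| * r <= `|z + t *: e|.
Proof.
move=> Zz; have [->|t0] := eqVneq t 0; first by rewrite normr0 mul0r.
have -> : z + t *: e = t *: (e - (- t^-1) *: z).
  by rewrite scalerBr scalerA mulrN mulfV // scaleN1r opprK addrC.
have [_ _ ZZ] := sZ; by rewrite normrZ ler_wpM2l //; apply: r_dist; apply: ZZ.
Qed.

Lemma add_line_coords_bounded x z t B eta : Z z -> `|x| <= B ->
  `|x - (z + t *: e)| <= eta ->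
  `|t| <= (B + eta) / r /\ `|z| <= B + eta + (B + eta) / r * `|e|.
Proof.
move=> Zz xB xzt.
have zt_le : `|z + t *: e| <= B + eta.
  rewrite -[z + _](subKr x); apply: le_trans (ler_normB _ _) _; exact: lerD.
have t_le : `|t| <= (B + eta) / r.
  by rewrite ler_pdivlMr //; apply: le_trans (add_line_coord_le t Zz) zt_le.
split=> //; rewrite -[z](addrK (t *: e)); apply: le_trans (ler_normB _ _) _.
by rewrite normrZ; apply: lerD => //; apply: ler_wpM2r.
Qed.

End DistantLine.
End Subspaces.

Section RamseyNear.
Variables (R : realType) (X : normedModType R) (Y : set X) (k : nat).

Definition ramsey_near (Z : set X) := forall (M0 : set nat)
  (F : ('I_k -> nat) -> X) (B d : R), unbounded M0 -> 0 < d ->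
  (forall n, in_tuples M0 n -> Z (F n) /\ `|F n| <= B) ->
  exists M, [/\ M `<=` M0, unbounded M & forall n m,
    in_tuples M n -> in_tuples M m -> exists2 y, Y y & `|F n - F m - y| <= d].

Lemma ramsey_nearS (Z Z' : set X) : Z' `<=` Z -> ramsey_near Z -> ramsey_near Z'.
Proof.
move=> Z'Z nearZ M0 F B d uM0 d0 FZ'.
by apply: (nearZ M0 F B) => // n /FZ'[/Z'Z].
Qed.

Lemma ramsey_near_subspace : is_subspace Y -> ramsey_near Y.
Proof.
move=> sY M0 F B d uM0 d0 FY; exists M0; split=> // n m nM mM.
by exists (F n - F m); [apply: subspaceB; case: (FY n nM); case: (FY m mM)
  | rewrite subrr normr0 ltW].
Qed.

(* Taking the closure keeps the spaces closed without proving that [Z + R e] is. *)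
Lemma ramsey_near_add_line (Z : set X) e : is_subspace Z -> closed Z ->
  ramsey_near Z -> ramsey_near (closure (add_line Z e)).
Proof.
move=> sZ cZ nearZ; have [Ze|Ze] := EM (Z e).
  apply: ramsey_nearS nearZ; rewrite [X in _ `<=` X](closure_id Z).1 //.
  apply: closureS => _ [z Zz [t _ <-]].
  by case: sZ => _ ZD ZZ; apply: ZD => //; apply: ZZ.
have [r r0 r_dist] := closed_dist_gt0 cZ Ze.
move=> M0 F B d uM0 d0 FZ.
have d4 : 0 < d / 4 by rewrite divr_gt0.
have /choice[zt ztP] : forall n, exists zt : X * R, in_tuples M0 n ->
    Z zt.1 /\ `|F n - (zt.1 + zt.2 *: e)| <= d / 4.
  move=> n; have [nM0|] := EM (in_tuples M0 n); last by exists (0, 0).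
  have [_ [z Zz [t _ <-]] Fzt] := (closure_normP _ _).1 (FZ n nM0).1 _ d4.
  by exists (z, t) => _; split=> //; apply: ltW.
pose C := B + d / 4 + (B + d / 4) / r * `|e|.
have ztB n : in_tuples M0 n -> `|(zt n).2| <= (B + d / 4) / r /\ `|(zt n).1| <= C.
  move=> nM0; have [Zz Fzt] := ztP n nM0.
  by have := add_line_coords_bounded sZ r0 r_dist Zz (FZ n nM0).2 Fzt.
pose eta := d / (4 * (`|e| + 1)).
have eta0 : 0 < eta by rewrite divr_gt0 // mulr_gt0 // ltr_wpDl.
have [M1 [M1M0 uM1 tM1]] := ramsey_real (t := fun n => (zt n).2) uM0 eta0
  (fun n nM0 => (ztB n nM0).1).
have [M [MM1 uM zM]] := nearZ M1 (fun n => (zt n).1) C (d / 4) uM1 d4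
  (fun n nM1 => conj (ztP n (in_tuplesS M1M0 nM1)).1 (ztB n (in_tuplesS M1M0 nM1)).2).
exists M; split=> [x /MM1/M1M0 // | // | n m nM mM].
have [y Yy zy] := zM n m nM mM; exists y => //.
have [nM1 mM1] := (in_tuplesS MM1 nM, in_tuplesS MM1 mM).
have [_ Fn] := ztP n (in_tuplesS M1M0 nM1); have [_ Fm] := ztP m (in_tuplesS M1M0 mM1).
have te : `|(zt n).2 - (zt m).2| * `|e| <= d / 4.
  apply: le_trans (ler_wpM2r (normr_ge0 _) (tM1 n m nM1 mM1)) _.
  rewrite /eta mulrC mulrA ler_pdivrMr ?mulr_gt0 ?ltr_wpDl //.
  by rewrite mulrA divfK ?pnatr_eq0 // mulrDr mulr1 mulrC lerDl ltW.
apply: le_trans (ler_dist_add_line e _ _ _ _ _ _ _) _; lra.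
Qed.

Lemma ramsey_near_span : is_subspace Y -> closed Y -> forall d (e : 'I_d -> X),
  exists Z, [/\ is_subspace Z, closed Z, ramsey_near Z &
    forall y c, Y y -> Z (y + \sum_(i < d) c i *: e i)].
Proof.
move=> sY cY; elim=> [|d IH] e.
  exists Y; split=> //; first exact: ramsey_near_subspace.
  by move=> y c Yy; rewrite big_ord0 addr0.
have [Z [sZ cZ nearZ spanZ]] := IH (fun i => e (widen_ord (leqnSn d) i)).
exists (closure (add_line Z (e ord_max))); split.
- exact/subspace_closure/subspace_add_line.
- exact: closed_closure.
- exact: ramsey_near_add_line.
move=> y c Yy; rewrite big_ord_recr /= addrA; apply: subset_closure.
by exists (y + \sum_(i < d) c (widen_ord (leqnSn d) i) *: e (widen_ord (leqnSn d) i));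
  [exact: spanZ | exists (c ord_max)].
Qed.

Lemma ramsey_near_finite_codim : closed_subspace Y -> finite_codim Y ->
  ramsey_near [set: X].
Proof.
move=> /closed_subspaceP[sY cY] [d [e codimY]].
have [Z [_ _ nearZ spanZ]] := ramsey_near_span sY cY e.
apply: ramsey_nearS nearZ => x _; have [c Yc] := codimY x.
by have := spanZ _ c Yc; rewrite subrK.
Qed.

End RamseyNear.

Section LpNorm.
Variables (R : realType) (p : R).
Hypothesis p_gt1 : 1 < p.

Definition lpnorm k (v : 'I_k -> R) := (\sum_(j < k) v j `^ p) `^ p^-1.

Let p_gt0 : 0 < p. Proof. exact: lt_trans ltr01 p_gt1. Qed.
Let pV_ge0 : 0 <= p^-1. Proof. by rewrite invr_ge0 ltW. Qed.

Lemma lpnorm_ge0 k (v : 'I_k -> R) : 0 <= lpnorm v.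
Proof. exact: powR_ge0. Qed.

Lemma ler_powR2 x y : 0 <= x -> x <= y -> x `^ p <= y `^ p.
Proof.
by move=> x0 xy; apply: ge0_ler_powR; rewrite ?nnegrE ?(ltW p_gt0) ?(le_trans x0).
Qed.

Lemma lpnorm_le k (v w : 'I_k -> R) :
  (forall j, 0 <= v j <= w j) -> lpnorm v <= lpnorm w.
Proof.
move=> vw; apply: ge0_ler_powR; rewrite ?nnegrE //.
- by apply: sumr_ge0 => j _; apply: powR_ge0.
- by apply: sumr_ge0 => j _; apply: powR_ge0.
by apply: ler_sum => j _; have /andP[v0 vwj] := vw j; apply: ler_powR2.
Qed.

Lemma lpnorm_eq0 k (v : 'I_k -> R) :
  (forall j, 0 <= v j) -> lpnorm v = 0 -> forall j, v j = 0.
Proof.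
move=> v0 /powR_eq0_eq0 sum0 j; apply: (@powR_eq0_eq0 _ _ p).
apply: (psumr_eq0P (P := xpredT) (F := fun j => v j `^ p)) => // i _.
exact: powR_ge0.
Qed.

Lemma lpnormK k (v : 'I_k -> R) : lpnorm v `^ p = \sum_(j < k) v j `^ p.
Proof.
rewrite -powRrM mulVf ?gt_eqF // powRr1 //.
by apply: sumr_ge0 => j _; apply: powR_ge0.
Qed.

Lemma powR_le_id x : 0 <= x <= 1 -> x `^ p <= x.
Proof.
move=> /andP[x0 x1]; have [->|xn0] := eqVneq x 0; first by rewrite powR0 ?gt_eqF.
apply: ge1r_powR; last exact: ltW.
by rewrite x1 andbT lt_neqAle eq_sym xn0.
Qed.

Lemma powR_superadd a b : 0 <= a -> 0 <= b -> a `^ p + b `^ p <= (a + b) `^ p.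
Proof.
move=> a0 b0; have [ab0|ab_gt0] := eqVneq (a + b) 0.
  have [-> ->] : a = 0 /\ b = 0 by split; lra.
  by rewrite addr0 powR0 ?addr0 ?gt_eqF.
have ab_pos : 0 < a + b by rewrite lt_neqAle eq_sym ab_gt0 addr_ge0.
have scale x : 0 <= x -> x `^ p = (x / (a + b)) `^ p * (a + b) `^ p.
  by move=> x0; rewrite -powRM ?divfK ?gt_eqF ?divr_ge0 // ltW.
rewrite (scale a) // (scale b) // -mulrDl ler_piMl ?powR_ge0 //.
have unit x : 0 <= x <= a + b -> 0 <= x / (a + b) <= 1.
  by move=> /andP[x0 xab]; rewrite divr_ge0 ?(ltW ab_pos) //= ler_pdivrMr // mul1r.
have /powR_le_id pa : 0 <= a / (a + b) <= 1 by apply: unit; lra.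
have /powR_le_id pb : 0 <= b / (a + b) <= 1 by apply: unit; lra.
have : a / (a + b) + b / (a + b) = 1 by rewrite -mulrDl divff.
lra.
Qed.

Lemma sum_powR_le k (v : 'I_k -> R) : (forall j, 0 <= v j) ->
  \sum_(j < k) v j `^ p <= (\sum_(j < k) v j) `^ p.
Proof.
elim: k v => [|k IH] v v0; first by rewrite !big_ord0 powR_ge0.
rewrite !big_ord_recr /=.
apply: le_trans (powR_superadd (sumr_ge0 _ (fun j _ => v0 _)) (v0 ord_max)).
by rewrite lerD2r IH.
Qed.

(* [L + c] is at most [(1 + th) L] if [c <= th L], and at most [(1 + th^-1) c]
   otherwise. *)
Lemma powR_addr_le L c th : 0 <= L -> 0 <= c -> 0 < th ->
  (L + c) `^ p <= ((1 + th) * L) `^ p + ((1 + th^-1) * c) `^ p.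
Proof.
move=> L0 c0 th0.
have A : 0 <= ((1 + th) * L) `^ p by apply: powR_ge0.
have B : 0 <= ((1 + th^-1) * c) `^ p by apply: powR_ge0.
have [cL|Lc] := lerP c (th * L).
  suff : (L + c) `^ p <= ((1 + th) * L) `^ p by lra.
  by apply: ler_powR2; lra.
suff : (L + c) `^ p <= ((1 + th^-1) * c) `^ p by lra.
apply: ler_powR2; first lra.
have : L <= th^-1 * c by rewrite mulrC ler_pdivlMr // mulrC ltW.
rewrite mulrDl mul1r; lra.
Qed.

Lemma lpnorm_addr_le k (L : 'I_k -> R) c th :
  (forall j, 0 <= L j) -> 0 <= c -> 0 < th ->
  lpnorm (fun j => L j + c) <= (1 + th) * lpnorm L + k%:R * (1 + th^-1) * c.
Proof.
move=> L0 c0 th0.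
have th1 : 0 <= 1 + th^-1 by rewrite addr_ge0 // invr_ge0 ltW.
have C0 : 0 <= k%:R * (1 + th^-1) * c by rewrite !mulr_ge0.
have th_ge0 : 0 <= 1 + th by rewrite addr_ge0 ?ltW.
have S0 : 0 <= (1 + th) * lpnorm L by rewrite mulr_ge0 ?lpnorm_ge0.
have sum_le : \sum_(j < k) (L j + c) `^ p <=
    ((1 + th) * lpnorm L) `^ p + (k%:R * (1 + th^-1) * c) `^ p.
  apply: le_trans (ler_sum _ (fun j _ => powR_addr_le (L0 j) c0 th0)) _.
  rewrite big_split /=; apply: lerD.
    rewrite (powRM p th_ge0 (lpnorm_ge0 _)) lpnormK mulr_sumr.
    by apply: ler_sum => j _; rewrite powRM.
  have := sum_powR_le (fun _ : 'I_k => mulr_ge0 th1 c0).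
  by move=> /le_trans; apply; rewrite sumr_const card_ord -mulrA mulr_natl.
have := le_trans sum_le (powR_superadd S0 C0).
move=> /(ge0_ler_powR pV_ge0); rewrite -powRrM mulfV ?gt_eqF // powRr1; last first.
  exact: addr_ge0.
apply; rewrite ?nnegrE ?powR_ge0 //.
by apply: sumr_ge0 => j _; apply: powR_ge0.
Qed.

Lemma lpnorm_perturb k (L : 'I_k -> R) lam eps :
  0 < lam -> 0 < eps -> (forall j, 0 <= L j) -> 0 < lpnorm L ->
  exists2 dl, 0 < dl &
    lam * lpnorm (fun j => L j + 2 * dl) + 2 * dl <= (lam + eps) * lpnorm L.
Proof.
move=> lam0 eps0 L0; set S := lpnorm L => S0.
pose th := eps / (2 * lam).
have th0 : 0 < th by rewrite divr_gt0 // mulr_gt0.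
pose K := lam * k%:R * (1 + th^-1) + 1.
have K0 : 0 < K.
  have th1 : 0 <= 1 + th^-1 by rewrite addr_ge0 // invr_ge0 ltW.
  have : 0 <= lam * k%:R * (1 + th^-1) by rewrite !mulr_ge0 // ltW.
  rewrite /K; lra.
exists (eps * S / (4 * K)); first by rewrite !divr_gt0 ?mulr_gt0.
set dl := eps * S / (4 * K).
have dl0 : 0 <= 2 * dl by rewrite mulr_ge0 // ltW // !divr_gt0 ?mulr_gt0.
have := ler_wpM2l (ltW lam0) (lpnorm_addr_le L0 dl0 th0).
suff <- : lam * ((1 + th) * S + k%:R * (1 + th^-1) * (2 * dl)) + 2 * dl
    = (lam + eps) * S by move=> le; rewrite lerD2r.
have E1 : lam * ((1 + th) * S) = lam * S + eps * S / 2.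
  by rewrite /th; field; rewrite gt_eqF.
have E2 : lam * (k%:R * (1 + th^-1) * (2 * dl)) + 2 * dl = 2 * dl * K.
  by rewrite /K; ring.
have E3 : 2 * dl * K = eps * S / 2 by rewrite /dl; field; rewrite gt_eqF.
by rewrite mulrDr -addrA E2 E3 E1; field.
Qed.

End LpNorm.

Section Lipschitz.
Variables (R : realType) (X : normedModType R) (k : nat).

Lemma Hj_exists (j : 'I_k) : exists n m, Hj j n m.
Proof.
exists (fun i => (2 * i)%N), (fun i => if i == j then (2 * i).+1 else (2 * i)%N).
split; first by split=> // i i' ii'; lia.
split; first by split=> // i i'; case: (i == j); case: (i' == j); lia.
by split=> [i /negbTE ->|]; rewrite ?eqxx.
Qed.

Lemma Lipj_le (f : ('I_k -> nat) -> X) j c :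
  (forall n m, Hj j n m -> `|f n - f m| <= c) -> Lipj f j <= c.
Proof.
move=> fc; apply: ge_sup; last by move=> _ [n [m [nm ->]]]; apply: fc.
by have [n [m nm]] := Hj_exists j; exists `|f n - f m|, n, m.
Qed.

Variables (f : ('I_k -> nat) -> X) (B : R).
Hypothesis f_bounded : forall n, in_tuples setT n -> `|f n| <= B.

Lemma Lipj_ub j n m : Hj j n m -> `|f n - f m| <= Lipj f j.
Proof.
move=> nm; apply: ub_le_sup; last by exists n, m.
exists (B + B) => _ [n' [m' [[n't [m't _]] ->]]].
by apply: le_trans (ler_normB _ _) _; apply: lerD; apply: f_bounded.
Qed.

Lemma Lipj_ge0 j : 0 <= Lipj f j.
Proof. by have [n [m nm]] := Hj_exists j; apply: le_trans (Lipj_ub nm). Qed.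

End Lipschitz.

Lemma Hj_chain (T : Type) k (f : ('I_k -> nat) -> T) :
  (forall j n m, Hj j n m -> f n = f m) ->
  forall n w, in_tuples setT n -> in_tuples setT w ->
  (forall i i', (n i < w i')%N) -> f n = f w.
Proof.
move=> f_edge n w [n_inc _] [w_inc _] nw.
(* [u l] takes its top [l] coordinates from [w]; consecutive ones differ by an H_j edge. *)
pose u l (i : 'I_k) := if (k - l <= i)%N then w i else n i.
have u_tuple l : in_tuples setT (u l).
  split=> // i i' ii'; rewrite /u.
  by case: ifP => li; case: ifP => li'; [exact: w_inc | lia | exact: nw | exact: n_inc].
have u_step l : (l < k)%N -> f (u l) = f (u l.+1).
  move=> lk; have jk : (k - l.+1 < k)%N by lia.
  apply: (f_edge (Ordinal jk)); split; [exact: u_tuple | split; [exact: u_tuple|]].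
  split=> [i /eqP ij | ]; rewrite /u /=.
    have ne : (i : nat) <> (k - l.+1)%N by move=> e; apply: ij; apply: val_inj.
    by have -> : (k - l <= i)%N = (k - l.+1 <= i)%N by apply/idP/idP; lia.
  by rewrite leqnn ifF //; apply/negbTE; rewrite -ltnNge; lia.
have u0 : u 0%N = n by apply: funext => i; rewrite /u subn0 leqNgt ltn_ord.
have uk : u k = w by apply: funext => i; rewrite /u subnn.
suff: forall l, (l <= k)%N -> f n = f (u l) by move/(_ k (leqnn k)); rewrite uk.
elim=> [|l IH] lk; first by rewrite u0.
by rewrite (IH (ltnW lk)) u_step.
Qed.

Lemma Lipj_eq0_const (R : realType) (X : normedModType R) k
    (f : ('I_k -> nat) -> X) (B : R) :
  (forall n, in_tuples setT n -> `|f n| <= B) -> (forall j, Lipj f j = 0) ->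
  forall n m, in_tuples setT n -> in_tuples setT m -> f n = f m.
Proof.
move=> fB Lip0 n m nT mT.
have f_edge j n' m' : Hj j n' m' -> f n' = f m'.
  move=> nm; apply/eqP; rewrite -subr_eq0 -normr_le0 -(Lip0 j).
  exact: Lipj_ub fB _ _ _ nm.
pose K := (\max_(i : 'I_k) (n i + m i))%N.
have K_ge i : (n i + m i <= K)%N by apply: (@leq_bigmax _ (fun i => n i + m i)%N).
pose w (i : 'I_k) := (K + i).+1.
have wT : in_tuples setT w by split=> // i j ij; rewrite /w; lia.
rewrite (Hj_chain f_edge nT wT) ?(Hj_chain f_edge mT wT) // => i i';
  have := K_ge i; rewrite /w; lia.
Qed.

Section Reindex.
Variables (phi : nat -> nat) (k : nat).
Hypothesis phi_inc : {homo phi : i j / (i < j)%N}.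

Lemma in_tuples_comp (A M : set nat) (n : 'I_k -> nat) :
  (forall x, A x -> M (phi x)) -> in_tuples A n -> in_tuples M (phi \o n).
Proof. by move=> AM [n_inc nA]; split=> [i j /n_inc/phi_inc | i]; last exact: AM. Qed.

Lemma Hj_comp j (n m : 'I_k -> nat) : Hj j n m -> Hj j (phi \o n) (phi \o m).
Proof.
move=> [nT [mT [nm_eq nm_lt]]]; split; first exact: in_tuples_comp nT.
split; first exact: in_tuples_comp mT.
by split=> [i /nm_eq /= ->|]; last exact: phi_inc.
Qed.

Lemma Lipj_comp (R : realType) (X : normedModType R) (f : ('I_k -> nat) -> X) B j :
  (forall n, in_tuples setT n -> `|f n| <= B) ->
  Lipj (fun n => f (phi \o n)) j <= Lipj f j.
Proof. by move=> fB; apply: Lipj_le => n m /Hj_comp nm; apply: Lipj_ub fB _ _ _ nm. Qed.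

Definition hc_pair (interl : bool) (M : set nat) (n m : 'I_k -> nat) :=
  if interl then interlaced M n m else in_tuples M n /\ in_tuples M m.

Lemma hc_pair_tuples interl M (n m : 'I_k -> nat) :
  hc_pair interl M n m -> in_tuples M n /\ in_tuples M m.
Proof. by case: interl => [[? []]|]. Qed.

Lemma hc_pair_image interl (M : set nat) (n m : 'I_k -> nat) :
  hc_pair interl (phi @` M) n m ->
  exists a a', [/\ n = phi \o a, m = phi \o a' & hc_pair interl M a a'].
Proof.
have phi_lt := leqW_mono (leq_mono phi_inc).
have preimage (n' : 'I_k -> nat) : in_tuples (phi @` M) n' ->
    exists2 a, n' = phi \o a & in_tuples M a.
  move=> [n'_inc n'M].
  have /choice[a aP] : forall i, exists x, M x /\ phi x = n' i.
    by move=> i; have [x Mx <-] := n'M i; exists x.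
  have -> : n' = phi \o a by apply: funext => i; rewrite /= (aP i).2.
  exists a => //; split=> [i j ij|i]; last exact: (aP i).1.
  by rewrite -phi_lt (aP i).2 (aP j).2 n'_inc.
move=> nm; have [nM mM] := hc_pair_tuples nm; move: nm.
have [a -> aM] := preimage n nM; have [a' -> a'M] := preimage m mM.
move=> nm; exists a, a'; split=> //; move: nm; rewrite /hc_pair.
case: interl => // -[_ [_ alt]]; split=> //; split=> // i.
have [lt_i next_i] := alt i; rewrite /= phi_lt in lt_i.
by split=> // j /next_i; rewrite /= phi_lt.
Qed.

End Reindex.

Section NearSubspace.
Variables (R : realType) (X : normedModType R) (Y : set X) (interl : bool) (p lam : R).
Hypotheses (p_gt1 : 1 < p) (lam_gt0 : 0 < lam) (HC_Y : has_HC interl p lam Y).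

(* Anchoring at the tuple [0 < 1 < ... < k-1], [f n - f n0] is approximated by a
   [Y]-valued map, to which the property of [Y] applies. *)
Lemma has_HC_near k (f : ('I_k -> nat) -> X) (B dl : R) :
  (forall n, in_tuples setT n -> `|f n| <= B) ->
  (forall n m, in_tuples setT n -> in_tuples setT m ->
     exists2 y, Y y & `|f n - f m - y| <= dl) ->
  exists M, infinite_set M /\ forall n m, hc_pair interl M n m ->
    `|f n - f m| <= lam * lpnorm p (fun j => Lipj f j + 2 * dl) + 2 * dl.
Proof.
move=> fB f_near.
pose n0 (i : 'I_k) := nat_of_ord i.
have n0T : in_tuples setT n0 by split.
have /choice[g gP] : forall n, exists y, in_tuples setT n ->
    Y y /\ `|f n - f n0 - y| <= dl.
  move=> n; have [nT|] := EM (in_tuples setT n); last by exists 0.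
  by have [y Yy fy] := f_near n n0 nT n0T; exists y.
have g_close n m : in_tuples setT n -> in_tuples setT m ->
    `|f n - f m| <= `|g n - g m| + 2 * dl /\ `|g n - g m| <= `|f n - f m| + 2 * dl.
  move=> nT mT; have [_ gn] := gP n nT; have [_ gm] := gP m mT.
  have fnm : f n - f n0 - (f m - f n0) = f n - f m by rewrite opprB subrKA.
  have := ler_dist_via (f n - f n0) (f m - f n0) (g n) (g m).
  have := ler_dist_via (g n) (g m) (f n - f n0) (f m - f n0).
  by rewrite fnm (distrC (g n) (f n - f n0)) (distrC (g m) (f m - f n0)); split; lra.
have gB n : in_tuples setT n -> `|g n| <= B + B + dl.
  move=> nT; have [_ gn] := gP n nT.
  rewrite -[g n](subKr (f n - f n0)); apply: le_trans (ler_normB _ _) _.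
  by apply: lerD => //; apply: le_trans (ler_normB _ _) _; apply: lerD; apply: fB.
have Lip_g j : Lipj g j <= Lipj f j + 2 * dl.
  apply: Lipj_le => n m nm; have [nT [mT _]] := nm.
  by apply: le_trans (g_close n m nT mT).2 _; rewrite lerD2r (Lipj_ub fB nm).
have [M [iM HM]] := HC_Y (fun n nT => (gP n nT).1) (ex_intro _ _ gB).
exists M; split=> // n m nm; have [nM mM] := hc_pair_tuples nm.
have [nT mT] := (in_tuplesS (@subsetT _ M) nM, in_tuplesS (@subsetT _ M) mM).
apply: le_trans (g_close n m nT mT).1 _; rewrite lerD2r.
apply: le_trans (HM n m nm) _; apply: ler_wpM2l; first exact: ltW.
apply: (lpnorm_le p_gt1) => j; rewrite Lip_g andbT.
exact: Lipj_ge0 gB j.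
Qed.

Lemma has_HC_approx k (f : ('I_k -> nat) -> X) (B dl : R) :
  ramsey_near Y k [set: X] -> 0 < dl ->
  (forall n, in_tuples setT n -> `|f n| <= B) ->
  exists M, infinite_set M /\ forall n m, hc_pair interl M n m ->
    `|f n - f m| <= lam * lpnorm p (fun j => Lipj f j + 2 * dl) + 2 * dl.
Proof.
move=> nearX dl0 fB.
have [M1 [_ uM1 f_near]] := nearX setT f B dl unboundedT dl0 (fun n nT => conj I (fB n nT)).
have [phi phiM1 phi_inc] := unbounded_enum uM1.
have phiT (n : 'I_k -> nat) : in_tuples setT n -> in_tuples M1 (phi \o n).
  by move=> nT; exact: (in_tuples_comp phi_inc (fun x (_ : setT x) => phiM1 x) nT).
have fphiB (n : 'I_k -> nat) : in_tuples setT n -> `|f (phi \o n)| <= B.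
  by move=> /phiT/(in_tuplesS (@subsetT _ M1)); apply: fB.
have [M [iM HM]] := has_HC_near (f := fun n => f (phi \o n)) fphiB
  (fun n m nT mT => f_near _ _ (phiT n nT) (phiT m mT)).
exists (phi @` M); split.
  by apply/unboundedP/(unbounded_image phi_inc)/unboundedP.
move=> _ _ /(hc_pair_image phi_inc)[a [a' [-> -> aa']]].
apply: le_trans (HM a a' aa') _; rewrite lerD2r; apply: ler_wpM2l; first exact: ltW.
apply: (lpnorm_le p_gt1) => j.
rewrite lerD2r (Lipj_comp phi_inc j fB) andbT.
by apply: addr_ge0; [apply: Lipj_ge0 fphiB j | rewrite mulr_ge0 ?ltW].
Qed.

End NearSubspace.

Lemma has_HC_finite_codim (R : realType) (X : normedModType R) (Y : set X)
    (interl : bool) (lam p : R) :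
  0 < lam -> 1 < p -> closed_subspace Y -> finite_codim Y ->
  has_HC interl p lam Y -> forall eps, 0 < eps -> has_HC interl p (lam + eps) [set: X].
Proof.
move=> lam0 p1 cY codimY HC_Y eps eps0 k f _ [B fB].
have L0 j : 0 <= Lipj f j := Lipj_ge0 fB j.
have S0 := lpnorm_ge0 p (Lipj f).
have [S_eq0|S_neq0] := eqVneq (lpnorm p (Lipj f)) 0.
  exists setT; split; first exact/unboundedP/unboundedT.
  move=> n m /hc_pair_tuples[nT mT].
  rewrite (Lipj_eq0_const fB (lpnorm_eq0 L0 S_eq0) nT mT) subrr normr0.
  by rewrite mulr_ge0 // addr_ge0 // ltW.
have S_gt0 : 0 < lpnorm p (Lipj f) by rewrite lt_neqAle eq_sym S_neq0.
have [dl dl0 perturb] := lpnorm_perturb p1 lam0 eps0 L0 S_gt0.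
have [M [iM HM]] := has_HC_approx p1 lam0 HC_Y (ramsey_near_finite_codim cY codimY) dl0 fB.
by exists M; split=> // n m nm; apply: le_trans (HM n m nm) perturb.
Qed.

Theorem lemma4p1 (R : realType) (X : completeNormedModType R) (Y : set X)
  (lam p : R) :
  0 < lam -> 1 < p -> closed_subspace Y -> finite_codim Y ->
  (HFC p lam Y -> forall eps : R, 0 < eps -> HFC p (lam + eps) [set: X]) /\
  (HIC p lam Y -> forall eps : R, 0 < eps -> HIC p (lam + eps) [set: X]).
Proof. by move=> lam0 p1 cY codimY; split; apply: has_HC_finite_codim. Qed.
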